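(* Let $B\subseteq\widetilde\Sigma^*\setminus\mathring\Sigma^+$ be a base in decomposed form with scaffold $sc$ and fill $fl$. Then $\mathcal{C}(B)=\big(sc\cup(sc\,@\,fl^@)\big)\cap\Sigma^*$.
   Context: $\Sigma$ is a finite alphabet, $\mathring\Sigma=\{\mathring a\mid a\in\Sigma\}$ a disjoint (''dotted'') copy, and $\widetilde\Sigma=\Sigma\cup\mathring\Sigma$. The match operation $@$ on letters is: $a@\mathring a=\mathring a@a=a$, $\mathring a@\mathring a=\mathring a$ for $a\in\Sigma$, undefined otherwise. For words $w,w'\in\widetilde\Sigma^n$, $w@w'=(w(1)@w'(1))\cdots(w(n)@w'(n))$ if every letterwise match is defined ($\epsilon@\epsilon=\epsilon$); otherwise (including unequal lengths) undefined. For languages, $B'@B''=\{w'@w''\mid w'\in B',w''\in B'', w'@w''\text{ defined}\}$. Define $B^{0@}=B$, $B^{i@}=B^{(i-1)@}@B$ for $i>0$, and $B^@=\bigcup_{i\ge0}B^{i@}$. The consensual language with base $B$ is $\mathcal{C}(B)=B^@\cap\Sigma^*$. A language $B$ is unproductive if $\mathcal{C}(B)=\emptyset$; a pair $(B,B')$ is unmatchable if $B@B'=\emptyset$. A base $B\subseteq\widetilde\Sigma^*\setminus\mathring\Sigma^+$ is in decomposed form with scaffold $sc$ and fill $fl$ if $B$ is the disjoint union of $sc$ and $fl$, $fl$ is unproductive, and the pair $(sc,sc)$ is unmatchable. *)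

From mathcomp Require Import all_boot.
Set Implicit Arguments. Unset Strict Implicit. Unset Printing Implicit Defensive.

(* Extended alphabet: inl a = undotted letter a, inr a = dotted letter (ring a). *)
Definition ext (S : finType) := (S + S)%type.
Definition word (S : finType) := seq (ext S).
Definition lang (S : finType) := word S -> Prop.

Definition lmatch (S : finType) (x y : ext S) : option (ext S) :=
  match x, y with
  | inl a, inr b => if a == b then Some (inl a) else None
  | inr a, inl b => if a == b then Some (inl b) else None
  | inr a, inr b => if a == b then Some (inr a) else None
  | inl _, inl _ => None
  end.

Fixpoint wmatch (S : finType) (w w' : word S) : option (word S) :=
  match w, w' with
  | [::], [::] => Some [::]
  | x :: u, y :: v =>
      match lmatch x y, wmatch u v with
      | Some z, Some r => Some (z :: r)
      | _, _ => None
      end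
  | _, _ => None
  end.

Definition lang_match (S : finType) (B1 B2 : lang S) : lang S :=
  fun w => exists w1 w2, B1 w1 /\ B2 w2 /\ wmatch w1 w2 = Some w.

Fixpoint mpow (S : finType) (B : lang S) (i : nat) : lang S :=
  match i with
  | 0 => B
  | i'.+1 => lang_match (mpow B i') B
  end.

Definition mstar (S : finType) (B : lang S) : lang S := fun w => exists i, mpow B i w.

Definition is_plain (S : finType) (w : word S) : Prop := all (fun x => if x is inl _ then true else false) w.
Definition all_dotted_nonempty (S : finType) (w : word S) : Prop :=
  w <> [::] /\ all (fun x => if x is inr _ then true else false) w.

Definition consensual (S : finType) (B : lang S) : lang S := fun w => mstar B w /\ is_plain w.

Definition unproductive (S : finType) (B : lang S) : Prop := forall w, ~ consensual B w.
Definition unmatchable (S : finType) (B1 B2 : lang S) : Prop := forall w, ~ lang_match B1 B2 w.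

Definition decomposed (S : finType) (B sc fl : lang S) : Prop :=
  (forall w, B w -> ~ all_dotted_nonempty w) /\
  (forall w, B w <-> sc w \/ fl w) /\
  (forall w, ~ (sc w /\ fl w)) /\
  unproductive fl /\ unmatchable sc sc.

(* The match operation is commutative and associative as a partial operation
   on words, so B^@ consists of all matches of finitely many words of B.
   A match involving two scaffold words would contain a match of those two
   scaffold words alone, which (sc, sc) forbids; hence every word of B^@ lies
   in fl^@, in sc, or in sc @ fl^@.  Since fl is unproductive, fl^@ contains
   no plain word; conversely sc @ fl^{k@} is contained in B^{(k+1)@}. *)
From mathcomp Require Import all_boot.

Set Implicit Arguments. Unset Strict Implicit. Unset Printing Implicit Defensive.

Section LetterMatch.
Variable S : finType.
Implicit Types x y z u v w : ext S.

Lemma lmatchC x y : lmatch x y = lmatch y x.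
Proof. by case: x y => a [] b //=; case: eqVneq => // ->. Qed.

Lemma lmatchA x y z u w : lmatch x y = Some u -> lmatch u z = Some w ->
  exists2 v, lmatch y z = Some v & lmatch x v = Some w.
Proof.
case: x y z => a [] b [] c //=; case: eqVneq => // -> [<-] //=;
  case: eqVneq => // -> [<-]; by eexists; [reflexivity | rewrite /= eqxx].
Qed.

End LetterMatch.

Section WordMatch.
Variable S : finType.
Implicit Types x y z u v w : word S.

Lemma wmatchC x y : wmatch x y = wmatch y x.
Proof. by elim: x y => [|a x IH] [|b y] //=; rewrite lmatchC IH. Qed.

Lemma wmatchA x y z u w : wmatch x y = Some u -> wmatch u z = Some w ->
  exists2 v, wmatch y z = Some v & wmatch x v = Some w.
Proof.
elim: x y z u w => [|a x IH] [|b y] [|c z] u w //=.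
- by move=> [<-] [<-]; exists [::].
- by move=> [<-].
- by case: (lmatch a b) => // d; case: (wmatch x y) => // r [<-].
case Eab: (lmatch a b) => [d|] //; case Exy: (wmatch x y) => [r|] // [<-] /=.
case Edc: (lmatch d c) => [e|] //; case Erz: (wmatch r z) => [t|] // [<-].
have [v Ebc Eav] := lmatchA Eab Edc; have [s Eyz Exs] := IH _ _ _ _ Exy Erz.
by exists (v :: s); rewrite /= ?Ebc ?Eyz ?Eav ?Exs.
Qed.

End WordMatch.

Section LanguageMatch.
Variable S : finType.
Implicit Types A B C : lang S.

Lemma lang_matchC A B w : lang_match A B w -> lang_match B A w.
Proof. by move=> [u [v [Au [Bv Euv]]]]; exists v, u; rewrite wmatchC. Qed.

Lemma lang_match_mono A A' B B' w :
  (forall u, A u -> A' u) -> (forall v, B v -> B' v) ->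
  lang_match A B w -> lang_match A' B' w.
Proof. by move=> AA' BB' [u [v [Au [Bv Euv]]]]; exists u, v; split; auto. Qed.

Lemma lang_matchA A B C w :
  lang_match (lang_match A B) C w <-> lang_match A (lang_match B C) w.
Proof.
split.
- move=> [u [z [[x [y [Ax [By Exy]]]] [Cz Euz]]]].
  have [v Eyz Exv] := wmatchA Exy Euz.
  by exists x, v; do 2!split=> //; exists y, z.
- move=> [x [v [Ax [[y [z [By [Cz Eyz]]]] Exv]]]].
  rewrite wmatchC in Eyz; rewrite wmatchC in Exv; have [u Eyx Ezu] := wmatchA Eyz Exv.
  exists u, z; split; first by exists x, y; rewrite wmatchC.
  by rewrite wmatchC.
Qed.

Lemma unmatchable_match_l A B C : unmatchable A C -> unmatchable (lang_match A B) C.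
Proof.
move=> unAC w /(lang_match_mono (@lang_matchC _ _) (fun _ Cw => Cw)).
by move=> /lang_matchA [_ [t [_ [ACt _]]]]; apply: (unAC t).
Qed.

Lemma mstar_match_r B w : lang_match (mstar B) B w -> mstar B w.
Proof. by move=> [u [v [[i Biu] [Bv Euv]]]]; exists i.+1, u, v. Qed.

End LanguageMatch.

Section Decomposition.
Variables (S : finType) (B sc fl : lang S).
Hypothesis B_split : forall w, B w <-> sc w \/ fl w.
Hypothesis sc_unmatchable : unmatchable sc sc.

Lemma mpow_scaffold_fill i w :
  mpow B i w -> [\/ mstar fl w, sc w | lang_match sc (mstar fl) w].
Proof.
elim: i w => [|i IH] w /=.
  by move=> /B_split [scw|flw]; [apply: Or32 | apply: Or31; exists 0].
move=> [u [b [Biu [Bb Eub]]]]; have := IH u Biu; case/B_split: Bb => [scb|flb] [flu|scu|mu].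
- by apply: Or33; apply: lang_matchC; exists u, b.
- by case: (sc_unmatchable (w:=w)); exists u, b.
- by case: (unmatchable_match_l (B:=mstar fl) sc_unmatchable (w:=w)); exists u, b.
- by apply: Or31; apply: mstar_match_r; exists u, b.
- by apply: Or33; exists u, b; do 2!split=> //; exists 0.
apply: Or33; apply: lang_match_mono (fun _ scx => scx) (@mstar_match_r _ _) _.
by apply/lang_matchA; exists u, b.
Qed.

Lemma match_scaffold_mpow_fill k w : lang_match sc (mpow fl k) w -> mpow B k.+1 w.
Proof.
elim: k w => [|k IH] w /=.
  by apply: lang_match_mono => v ?; apply/B_split; [left | right].
by move=> /lang_matchA; apply: lang_match_mono IH _ => v flv; apply/B_split; right.
Qed.

End Decomposition.

Theorem lemma1 (S : finType) (B sc fl : lang S) :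
  decomposed B sc fl ->
  forall w : word S,
    consensual B w <-> ((sc w \/ lang_match sc (mstar fl) w) /\ is_plain w).
Proof.
move=> [_ [B_split [_ [fl_unproductive sc_unmatchable]]]] w; split.
- move=> [[i Bw] plain]; split=> //.
  case: (mpow_scaffold_fill B_split sc_unmatchable Bw) => [flw|scw|mw]; [|by left|by right].
  by case: (fl_unproductive w).
- move=> [[scw|[u [v [scu [[k flv] Euv]]]]] plain]; split=> //.
    by exists 0; apply/B_split; left.
  exists k.+1; apply: (match_scaffold_mpow_fill B_split).
  by exists u, v.
Qed.
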